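(* Let $\mathbf a\in\mathbb{R}^{\mathbb{N}}$. If the linear centrality $f^{\mathbf a}$ is rank monotone, then it is score monotone.
   Context: Graphs are finite directed graphs; $d_G(x,y)$ is the shortest directed path length from $x$ to $y$ ($\infty$ if none). The linear centrality is $f^{\mathbf a}_G(i)=\sum_{z\in V_G,\ d_G(z,i)<\infty}a_{d_G(z,i)}$. For a graph $G$ and distinct nodes $x,y$ with $(x,y)\notin E_G$, let $G'$ be $G$ with the arc $x\to y$ added. A centrality $f$ is score monotone if for all such $G,x,y$, $f_{G'}(y)>f_G(y)$. It is rank monotone if for all such $G,x,y$ and every node $w\ne y$: if $f_G(w)\le f_G(y)$ then $f_{G'}(w)<f_{G'}(y)$. *)

From HB Require Import structures.
From mathcomp Require Import all_boot all_order all_algebra.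
From mathcomp Require Import reals.
Set Implicit Arguments. Unset Strict Implicit. Unset Printing Implicit Defensive.
Import Order.TTheory GRing.Theory Num.Theory.
Local Open Scope ring_scope.

Definition digraph (n : nat) := rel 'I_n.

Fixpoint walk (n : nat) (e : digraph n) (k : nat) (z i : 'I_n) : bool :=
  match k with
  | 0 => z == i
  | k'.+1 => [exists w : 'I_n, e z w && walk e k' w i]
  end.

(* d_G(z,i): length of a shortest directed path from z to i (Some d),
   or None (= infinity) if there is none.  A shortest walk is a path and has
   length < n, so searching lengths 0..n-1 is exhaustive. *)
Definition dist (n : nat) (e : digraph n) (z i : 'I_n) : option nat :=
  let k := find (fun k => walk e k z i) (iota 0 n) in
  if (k < n)%N then Some k else None.

Definition centrality (R : realType) := forall n : nat, digraph n -> 'I_n -> R.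

Definition linear_centrality (R : realType) (a : nat -> R) : centrality R :=
  fun n e i => \sum_(z : 'I_n)
     match dist e z i with Some d => a d | None => 0 end.

Definition add_arc (n : nat) (e : digraph n) (x y : 'I_n) : digraph n :=
  fun u v => e u v || ((u == x) && (v == y)).

Definition score_monotone (R : realType) (f : centrality R) : Prop :=
  forall (n : nat) (e : digraph n) (x y : 'I_n),
    x != y -> ~~ e x y -> f n e y < f n (add_arc e x y) y.

Definition rank_monotone (R : realType) (f : centrality R) : Prop :=
  forall (n : nat) (e : digraph n) (x y : 'I_n),
    x != y -> ~~ e x y ->
    forall w : 'I_n, w != y ->
      f n e w <= f n e y -> f n (add_arc e x y) w < f n (add_arc e x y) y.

From mathcomp Require Import all_boot all_algebra reals.
Set Implicit Arguments. Unset Strict Implicit. Unset Printing Implicit Defensive.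
Import GRing.Theory.
Local Open Scope ring_scope.

(* Linear centrality only sees the part of the graph from which a node is
   reachable, so in the disjoint union G + G a node y of either copy has the
   score f_G(y).  Add the arc x -> y inside the first copy and compare its y
   with the y of the second copy: the two scores are tied before the addition,
   so rank monotonicity makes the first one strictly larger afterwards, while
   the second one is still f_G(y).  Hence f_{G'}(y) > f_G(y). *)

Definition first_below (P : pred nat) (m : nat) : option nat :=
  let k := find P (iota 0 m) in if (k < m)%N then Some k else None.

Lemma eq_first_below (P Q : pred nat) m :
  P =1 Q -> first_below P m = first_below Q m.
Proof. by move=> eqPQ; rewrite /first_below (eq_find eqPQ). Qed.

Lemma first_below_pred0 (P : pred nat) m :
  P =1 pred0 -> first_below P m = None.
Proof.
by move=> P0; rewrite /first_below hasNfind ?size_iota ?ltnn // (eq_has P0) has_pred0.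
Qed.

Lemma first_below_widen (P : pred nat) m m' : (m <= m')%N ->
  (forall k, P k -> exists2 k', (k' < m)%N & P k') ->
  first_below P m' = first_below P m.
Proof.
move=> le_mm' short_P; have [hasP_m | noP_m] := boolP (has P (iota 0 m)).
  have lt_find := hasP_m; rewrite has_find size_iota in lt_find.
  rewrite /first_below -(subnKC le_mm') iotaD find_cat hasP_m lt_find.
  by rewrite subnKC // (leq_trans lt_find le_mm').
have P0 : P =1 pred0.
  move=> k /=; apply/negP => /short_P [k' lt_k'm Pk'].
  by case/hasP: noP_m; exists k'; rewrite ?mem_iota.
by rewrite !first_below_pred0.
Qed.

Lemma distE n (e : digraph n) z i :
  dist e z i = first_below (fun k => walk e k z i) n.
Proof. by []. Qed.

Section Walks.

Variables (n : nat) (e : digraph n).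

Lemma walk_path k z i :
  walk e k z i -> exists p, [/\ path e z p, size p = k & last z p = i].
Proof.
elim: k z => [|k IHk] z /=; first by move=> /eqP <-; exists [::].
case/existsP=> w /andP [ezw /IHk [p [e_p <- <-]]].
by exists (w :: p); rewrite /= ezw e_p.
Qed.

Lemma path_walk z p : path e z p -> walk e (size p) z (last z p).
Proof.
elim: p z => [|w p IHp] z //= /andP [ezw e_p].
by apply/existsP; exists w; rewrite ezw IHp.
Qed.

Lemma walk_shorten k z i : walk e k z i -> exists2 k', (k' < n)%N & walk e k' z i.
Proof.
case/walk_path=> p [e_p _ <-]; case: (shortenP e_p) => p' e_p' uniq_p' _.
exists (size p'); last exact: path_walk.
by have := max_card (mem (z :: p')); rewrite card_ord (card_uniqP uniq_p').
Qed.

End Walks.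

Lemma eq_walk n (e1 e2 : digraph n) : e1 =2 e2 -> forall k, walk e1 k =2 walk e2 k.
Proof. by move=> eq_e; elim=> [|k IHk] z i //=; apply: eq_existsb => w; rewrite eq_e IHk. Qed.

Lemma eq_linear_centrality (R : realType) (a : nat -> R) n (e1 e2 : digraph n) :
  e1 =2 e2 -> linear_centrality a e1 =1 linear_centrality a e2.
Proof.
move=> eq_e i; apply: eq_bigr => z _.
by rewrite !distE (eq_first_below _ (fun k => eq_walk eq_e k z i)).
Qed.

Definition sum_rel (A B : Type) (r1 : rel A) (r2 : rel B) (s t : A + B) : bool :=
  match s, t with
  | inl a, inl b => r1 a b
  | inr a, inr b => r2 a b
  | _, _ => false
  end.

Definition dunion m n (e1 : digraph m) (e2 : digraph n) : digraph (m + n) :=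
  fun u v => sum_rel e1 e2 (split u) (split v).

Section DisjointUnion.

Variables (m n : nat) (e1 : digraph m) (e2 : digraph n).

Lemma walk_dunion k u v :
  walk (dunion e1 e2) k u v = sum_rel (walk e1 k) (walk e2 k) (split u) (split v).
Proof.
elim: k u v => [|k IHk] u v /=.
  by case: split_ordP => ? ->; case: split_ordP => ? ->; rewrite /= eq_shift.
rewrite /dunion; apply/existsP/idP => [[w] | ].
  by rewrite IHk; case: (split w) => c;
    case: (split u) => ?; case: (split v) => ? //= /andP [? ?] //;
    apply/existsP; exists c; apply/andP.
case: split_ordP => ? _; case: split_ordP => ? -> //= /existsP [c /andP [? ?]].
  by exists (lshift n c); rewrite IHk !(unsplitK (inl _)); apply/andP.
by exists (rshift m c); rewrite IHk !(unsplitK (inr _)); apply/andP.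
Qed.

Lemma dist_dunion_ll z i :
  dist (dunion e1 e2) (lshift n z) (lshift n i) = dist e1 z i.
Proof.
rewrite !distE (eq_first_below _ (fun k => walk_dunion k _ _)) !(unsplitK (inl _)).
by apply: first_below_widen => [|k /walk_shorten]; rewrite ?leq_addr.
Qed.

Lemma dist_dunion_rr z i :
  dist (dunion e1 e2) (rshift m z) (rshift m i) = dist e2 z i.
Proof.
rewrite !distE (eq_first_below _ (fun k => walk_dunion k _ _)) !(unsplitK (inr _)).
by apply: first_below_widen => [|k /walk_shorten]; rewrite ?leq_addl.
Qed.

Lemma dist_dunion_lr z i : dist (dunion e1 e2) (lshift n z) (rshift m i) = None.
Proof.
rewrite distE first_below_pred0 // => k /=.
by rewrite walk_dunion (unsplitK (inl _)) (unsplitK (inr _)).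
Qed.

Lemma dist_dunion_rl z i : dist (dunion e1 e2) (rshift m z) (lshift n i) = None.
Proof.
rewrite distE first_below_pred0 // => k /=.
by rewrite walk_dunion (unsplitK (inl _)) (unsplitK (inr _)).
Qed.

Variables (R : realType) (a : nat -> R).

Lemma linear_centrality_dunion_l i :
  linear_centrality a (dunion e1 e2) (lshift n i) = linear_centrality a e1 i.
Proof.
rewrite /linear_centrality big_split_ord /= [X in _ + X]big1 ?addr0.
  by apply: eq_bigr => z _; rewrite dist_dunion_ll.
by move=> z _; rewrite dist_dunion_rl.
Qed.

Lemma linear_centrality_dunion_r i :
  linear_centrality a (dunion e1 e2) (rshift m i) = linear_centrality a e2 i.
Proof.
rewrite /linear_centrality big_split_ord /= [X in X + _]big1 ?add0r.
  by apply: eq_bigr => z _; rewrite dist_dunion_rr.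
by move=> z _; rewrite dist_dunion_lr.
Qed.

Lemma add_arc_dunion_l x y :
  add_arc (dunion e1 e2) (lshift n x) (lshift n y) =2 dunion (add_arc e1 x y) e2.
Proof.
move=> u v; rewrite /add_arc /dunion.
by case: split_ordP => ? ->; case: split_ordP => ? ->; rewrite /= ?eq_shift ?andbF ?orbF.
Qed.

End DisjointUnion.

Theorem lemma1 (R : realType) (a : nat -> R) :
  rank_monotone (linear_centrality a) -> score_monotone (linear_centrality a).
Proof.
move=> rank_mono n e x y neq_xy not_exy.
have := rank_mono _ (dunion e e) (lshift n x) (lshift n y) _ _ (rshift n y).
rewrite !(eq_linear_centrality a (add_arc_dunion_l e e x y)).
rewrite !linear_centrality_dunion_l !linear_centrality_dunion_r; apply => //.
- by rewrite /dunion !(unsplitK (inl _)).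
- by rewrite eq_shift.
Qed.
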